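(* Let $P$ be a finite poset and let $P'$ be a poset with $P\subseteq P'\subseteq S_N(S_N(P))$ (as induced subposets). Then $N_{diag}(P')\subseteq N_{diag}(P)\cup A(P)$.
   Context: For a poset $P$, $x\prec y$ means $x<y$ with no $z$ satisfying $x<z<y$; $\mathrm{Diag}(P)$ is the set of covering pairs $(x,y)$, and $\mathrm{Inc}(P)$ the set of pairs of incomparable elements. Four elements $a,b,c,d$ form an $N$ in $P$ if $b\prec c$, $a\prec c$, $b\prec d$ and $(a,d)\in\mathrm{Inc}(P)$; $(b,c)$ is the diagonal edge of this $N$. $N_{diag}(P)$ is the set of diagonal edges of all $N$'s in $P$. $S_N(P)$ is the poset obtained from $P$ by adding one new (dummy) vertex $u$ on each edge $(b,c)\in N_{diag}(P)$ (so that $b\prec u\prec c$), with the induced order; thus $P\subseteq S_N(P)\subseteq S_N(S_N(P))$. $A(P)$ is the set of pairs $(b,c)\in\mathrm{Diag}(P)\setminus N_{diag}(P)$ for which there exist $a,d\in P$ with $a<c$, $b<d$, $(a,b),(c,d)\in\mathrm{Inc}(P)$, and either $(a,c)\in N_{diag}(P)$ or $(b,d)\in N_{diag}(P)$. *)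

(* A finite poset is a finType T with a partial order
   relation le : rel T.  Subposets are represented by a carrier set
   S : {set T} with the induced order (le restricted to S). *)
From mathcomp Require Import all_boot.
Set Implicit Arguments. Unset Strict Implicit. Unset Printing Implicit Defensive.

Section Posets.
Variables (T : finType) (S : {set T}) (le : rel T).

Definition plt (x y : T) : bool := le x y && (x != y).

Definition covers (x y : T) : bool :=
  [&& x \in S, y \in S, plt x y & ~~ [exists z in S, plt x z && plt z y]].

Definition incomp (x y : T) : bool :=
  [&& x \in S, y \in S, ~~ le x y & ~~ le y x].

Definition isN (a b c d : T) : bool :=
  [&& covers b c, covers a c, covers b d & incomp a d].

Definition ndiag (p : T * T) : bool :=
  [exists a, exists d, isN a p.1 p.2 d].

Definition Ndiag : {set T * T} := [set p | ndiag p].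

Definition inA (p : T * T) : bool :=
  [&& covers p.1 p.2, ~~ ndiag p &
    [exists a in S, exists d in S,
      [&& plt a p.2, plt p.1 d, incomp a p.1, incomp p.2 d &
          ndiag (a, p.2) || ndiag (p.1, d)]]].

Definition Aset : {set T * T} := [set p | inA p].

End Posets.

(* S_N: new carrier type T + T*T, the dummy vertex on the diagonal edge
   (b,c) being inr (b,c).  Order: b < u < c, with induced order. *)
Definition SNT (T : finType) : finType := (T + T * T)%type.

Definition SN_le (T : finType) (le : rel T) : rel (SNT T) :=
  fun x y =>
    match x, y with
    | inl x, inl y => le x y
    | inl x, inr q => le x q.1
    | inr p, inl y => le p.2 y
    | inr p, inr q => (p == q) || le p.2 q.1
    end.

Definition SN_set (T : finType) (S : {set T}) (le : rel T) : {set SNT T} :=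
  (@inl T (T * T)) @: S :|: (@inr T (T * T)) @: Ndiag S le.

Definition emb2 (T : finType) (x : T) : SNT (SNT T) := inl (inl x).

Definition po_refl (T : finType) (le : rel T) := forall x, le x x.
Definition po_antisym (T : finType) (le : rel T) :=
  forall x y, le x y -> le y x -> x = y.
Definition po_trans (T : finType) (le : rel T) :=
  forall x y z, le x y -> le y z -> le x z.

(* An N-diagonal of P' joins two vertices b < c of P: a dummy vertex has a
   single upper and a single lower cover, so it cannot be the bottom or the
   top of the diagonal of an N.  If the two other vertices of the N are in P,
   then (b, c) is an N-diagonal of P.  Otherwise one of them is a dummy vertex
   subdividing an edge e of P that shares its top c or its bottom b with
   (b, c), and e is an N-diagonal of P or of S_N(P); unwinding the N of S_N(P)
   at e shows that c is the top or b is the bottom of some N-diagonal of P.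
   The key fact is that when no N-diagonal of P ends at c, an N-diagonal
   starting at a lower cover of c can be moved to start at any other lower
   cover of c (and dually).  The N-diagonal found at c or b, together with the
   remaining vertices of the N of P', then witnesses (b, c) in A(P). *)

From mathcomp Require Import all_boot.
Set Implicit Arguments. Unset Strict Implicit. Unset Printing Implicit Defensive.

Definition dual_rel (T : Type) (r : rel T) : rel T := fun x y => r y x.

Record partial_order (T : finType) (le : rel T) : Prop := PartialOrder {
  lexx : po_refl le; le_anti : po_antisym le; le_trans : po_trans le }.

Definition ndiag_at (T : finType) (le : rel T) (b c : T) : bool :=
  [exists x, ndiag [set: T] le (x, c)] || [exists y, ndiag [set: T] le (b, y)].

Section Basics.
Variables (T : finType) (S : {set T}) (le : rel T).

Lemma pltW x y : plt le x y -> le x y.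
Proof. by case/andP. Qed.

Lemma covers_plt x y : covers S le x y -> plt le x y.
Proof. by case/and4P. Qed.

Lemma covers_mem x y : covers S le x y -> (x \in S) && (y \in S).
Proof. by case/and4P=> -> ->. Qed.

Lemma covers_nomid x y z :
  covers S le x y -> z \in S -> plt le x z -> plt le z y -> False.
Proof. by case/and4P=> _ _ _ /existsPn/(_ z) + zS xz zy; rewrite zS xz zy. Qed.

Lemma incomp_sym x y : incomp S le x y = incomp S le y x.
Proof. by rewrite /incomp andbCA [~~ le y x && _]andbC. Qed.

Lemma ndiagP b c :
  reflect (exists a d, [/\ covers S le b c, covers S le a c,
                           covers S le b d & incomp S le a d])
          (ndiag S le (b, c)).
Proof.
apply: (iffP existsP) => [[a /existsP[d /and4P[]]] | [a [d [*]]]].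
  by exists a, d.
by exists a; apply/existsP; exists d; apply/and4P.
Qed.

End Basics.

Section Duality.
Variables (T : finType) (S : {set T}) (le : rel T).

Lemma plt_dual x y : plt (dual_rel le) x y = plt le y x.
Proof. by rewrite /plt eq_sym. Qed.

Lemma covers_dual x y : covers S (dual_rel le) x y = covers S le y x.
Proof.
rewrite /covers plt_dual andbCA; congr [&& _, _, _ & ~~ _].
by apply: eq_existsb => z; rewrite !plt_dual [plt le y z && _]andbC.
Qed.

Lemma incomp_dual x y : incomp S (dual_rel le) x y = incomp S le x y.
Proof. by rewrite /incomp /dual_rel [~~ le y x && _]andbC. Qed.

Lemma ndiag_dual b c : ndiag S (dual_rel le) (b, c) = ndiag S le (c, b).
Proof.
apply/ndiagP/ndiagP => -[a [d [h1 h2 h3 h4]]]; exists d, a;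
  by rewrite ?covers_dual ?incomp_dual incomp_sym in h1 h2 h3 h4 *.
Qed.

End Duality.

Section FullSet.
Variables (T : finType) (le : rel T).
Local Notation cov := (covers [set: T] le).
Local Notation inc := (incomp [set: T] le).
Local Notation nd := (ndiag [set: T] le).

Lemma coversTI x y :
  plt le x y -> (forall z, plt le x z -> plt le z y -> False) -> cov x y.
Proof.
move=> xy nomid; rewrite /covers !in_setT xy /=.
by apply/existsPn => z; rewrite in_setT /=; apply/negP => /andP[]; apply: nomid.
Qed.

Lemma incompT x y : inc x y = ~~ le x y && ~~ le y x.
Proof. by rewrite /incomp !in_setT. Qed.

Lemma covers_le x y : cov x y -> le x y.
Proof. by move/covers_plt/pltW. Qed.

Lemma covers_between x y z : cov x y -> le x z -> le z y -> (z == x) || (z == y).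
Proof.
move=> xy xz zy; apply/norP => -[zx zy'].
by apply: (covers_nomid xy (in_setT z)); rewrite /plt ?xz ?zy // eq_sym.
Qed.

Lemma incomp_lower_covers a b c : cov a c -> cov b c -> a != b -> inc a b.
Proof.
move=> ac bc ab; rewrite incompT; apply/andP; split; apply/negP => hle.
  by apply: (covers_nomid ac (in_setT b)) (covers_plt bc); rewrite /plt hle ab.
by apply: (covers_nomid bc (in_setT a)) (covers_plt ac); rewrite /plt hle eq_sym ab.
Qed.

Lemma comparable_of_not_ndiag a b c d :
  ~~ nd (b, c) -> cov b c -> cov a c -> cov b d -> le a d || le d a.
Proof.
move=> nbc bc ac bd; apply: contraNT nbc => /norP[ad da].
by apply/ndiagP; exists a, d; rewrite incompT ad da.
Qed.

End FullSet.

Lemma partial_order_dual (T : finType) (le : rel T) :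
  partial_order le -> partial_order (dual_rel le).
Proof.
case=> refl anti trans; split=> // [x y yx xy | x y z yx zy].
  exact: anti.
exact: trans zy yx.
Qed.

Section Order.
Variables (T : finType) (le : rel T).
Hypothesis leP : partial_order le.
Local Notation cov := (covers [set: T] le).
Local Notation inc := (incomp [set: T] le).

Lemma card_downset_lt x y :
  plt le x y -> #|[set z | le z x]| < #|[set z | le z y]|.
Proof.
case/andP=> xy nxy; apply: proper_card; apply/properP; split.
  by apply/subsetP => z; rewrite !inE => zx; apply: (le_trans leP) zx xy.
exists y; first by rewrite inE (lexx leP).
by rewrite inE; apply: contra nxy => yx; apply/eqP/(le_anti leP).
Qed.

Lemma exists_cover_above x y : plt le x y -> exists2 z, cov x z & le z y.
Proof.
move=> xy; pose P z := plt le x z && le z y.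
have Py : P y by rewrite /P xy (lexx leP).
case: (arg_minnP (fun z => #|[set w | le w z]|) Py) => z /andP[xz zy] zmin.
exists z => //; apply: coversTI => // w xw wz.
have := zmin w; rewrite /P xw (le_trans leP (pltW wz) zy) => /(_ isT).
by rewrite leqNgt card_downset_lt.
Qed.

End Order.

Lemma exists_cover_below (T : finType) (le : rel T) (leP : partial_order le) x y :
  plt le x y -> exists2 z, le x z & covers [set: T] le z y.
Proof.
rewrite -(@plt_dual _ le) => /(exists_cover_above (partial_order_dual leP)) [z].
by rewrite covers_dual; exists z.
Qed.

Lemma incomp_upper_covers (T : finType) (le : rel T) (a b c : T) :
  covers [set: T] le a b -> covers [set: T] le a c -> b != c ->
  incomp [set: T] le b c.
Proof.
rewrite -!(@covers_dual _ _ le) -(@incomp_dual _ _ le).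
exact: incomp_lower_covers.
Qed.

Section NShift.
Variables (T : finType) (le : rel T).
Hypothesis leP : partial_order le.
Local Notation cov := (covers [set: T] le).
Local Notation inc := (incomp [set: T] le).
Local Notation nd := (ndiag [set: T] le).

Lemma incomp_N_corner a b c d d' : cov b c -> ~~ nd (b, c) -> ~~ le c d ->
  cov b d -> cov a d -> cov b d' -> inc a d' -> inc a c.
Proof.
move=> bc nbc ncd bd ad bd'; rewrite !incompT => /andP[nad' nd'a].
apply/andP; split; last first.
  by apply: contra ncd => ca; apply: (le_trans leP) ca (covers_le ad).
apply/negP => ac.
have [z az zc] : exists2 z, le a z & cov z c.
  apply: (exists_cover_below leP); rewrite /plt ac.
  by apply: contraNneq ncd => <-; apply: covers_le.
case/orP: (comparable_of_not_ndiag nbc bc zc bd') => [zd' | d'z].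
  by move: nad'; rewrite (le_trans leP az zd').
have := covers_between bc (covers_le bd') (le_trans leP d'z (covers_le zc)).
case/orP => /eqP ed'.
  by move: (covers_plt bd'); rewrite ed' /plt eqxx andbF.
by move: nad'; rewrite ed' ac.
Qed.

Lemma covers_square b b' c d : cov b c -> cov b' c -> b != b' ->
  cov b d -> d != c -> ~~ nd (b, c) -> ~~ nd (b', c) -> cov b' d.
Proof.
move=> bc b'c bb' bd dc nbc nb'c.
have /andP[nbb' nb'b] : ~~ le b b' && ~~ le b' b.
  by rewrite -incompT (incomp_lower_covers bc b'c).
have /andP[ncd ndc] : ~~ le c d && ~~ le d c.
  by rewrite -incompT (incomp_upper_covers bc bd) // eq_sym.
have b'd : plt le b' d.
  case/orP: (comparable_of_not_ndiag nbc bc b'c bd) => [b'd | db'].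
    by rewrite /plt b'd; apply: contraNneq ndc => <-; apply: covers_le.
  by move: nbb'; rewrite (le_trans leP (covers_le bd) db').
have [v b'v vd] := exists_cover_above leP b'd.
case/orP: (comparable_of_not_ndiag nb'c b'c bc b'v) => [bv | vb]; last first.
  by move: nb'b; rewrite (le_trans leP (covers_le b'v) vb).
case/orP: (covers_between bd bv vd) => /eqP ev; last by rewrite -ev.
by move: nb'b; rewrite -ev (covers_le b'v).
Qed.

Lemma ndiag_shift_bottom b b' c d : cov b c -> cov b' c -> b != b' ->
  (forall x, ~~ nd (x, c)) -> nd (b, d) -> nd (b', d).
Proof.
move=> bc b'c bb' noc bdN; have [a [d' [bd ad bd' ad']]] := ndiagP _ _ _ _ bdN.
have dc : d != c by apply: contraTneq bdN => ->; apply: noc.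
have /andP[ncd _] : ~~ le c d && ~~ le d c.
  by rewrite -incompT (incomp_upper_covers bc bd) // eq_sym.
apply/ndiagP; exists a, c; split => //.
  exact: covers_square bc b'c bb' bd dc (noc b) (noc b').
exact: incomp_N_corner bc (noc b) ncd bd ad bd' ad'.
Qed.

Lemma mem_NdiagUA a b c d : cov b c -> cov a c -> a != b -> cov b d -> d != c ->
  nd (b, c) || ndiag_at le b c -> (b, c) \in Ndiag [set: T] le :|: Aset [set: T] le.
Proof.
move=> bc ac ab bd dc; rewrite in_setU !inE /inA /= bc.
case: (boolP (nd (b, c))) => //= nbc.
have cd : c != d by rewrite eq_sym.
case/orP => [/existsP[x xc] | /existsP[y by_]].
  have [? [? [xc' _ _ _]]] := ndiagP _ _ _ _ xc.
  have xb : x != b by apply: contraNneq nbc => <-.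
  apply/existsP; exists x; rewrite in_setT /=; apply/existsP; exists d.
  by rewrite in_setT (covers_plt xc') (covers_plt bd) xc
    (incomp_lower_covers xc' bc) // (incomp_upper_covers bc bd).
have [? [? [by' _ _ _]]] := ndiagP _ _ _ _ by_.
have cy : c != y by apply: contraNneq nbc => ->.
apply/existsP; exists a; rewrite in_setT /=; apply/existsP; exists y.
by rewrite in_setT (covers_plt ac) (covers_plt by') by_ orbT
  (incomp_lower_covers ac bc) // (incomp_upper_covers bc by').
Qed.

End NShift.

Lemma ndiag_shift_top (T : finType) (le : rel T) (leP : partial_order le) a b c c' :
  covers [set: T] le b c -> covers [set: T] le b c' -> c != c' ->
  (forall y, ~~ ndiag [set: T] le (b, y)) ->
  ndiag [set: T] le (a, c) -> ndiag [set: T] le (a, c').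
Proof.
rewrite -!(covers_dual _ le) -!(@ndiag_dual _ _ le) => bc bc' cc' nob.
apply: (ndiag_shift_bottom (partial_order_dual leP) bc bc' cc') => x.
by rewrite ndiag_dual.
Qed.

Section Subdivision.
Variables (T U : finType) (le : rel T) (S : {set U}) (L : rel U).
Variables (orig : T -> U) (dummy : pred U) (lo hi : U -> T).

(* S, ordered by L, is P (embedded by orig) in which some covering pairs
   (lo u, hi u) of P are subdivided by a dummy vertex u.  Both S_N(P) and any
   P' between P and S_N(S_N(P)) have this shape. *)
Record subdivision : Prop := Subdivision {
  orig_in x : orig x \in S;
  orig_nondummy x : ~~ dummy (orig x);
  nondummy_orig z : z \in S -> ~~ dummy z -> exists x, z = orig x;
  lo_orig x : lo (orig x) = x;
  hi_orig x : hi (orig x) = x;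
  L_orig x y : L (orig x) (orig y) = le x y;
  L_orig_dummy x u : u \in S -> dummy u -> L (orig x) u = le x (lo u);
  L_dummy_orig u y : u \in S -> dummy u -> L u (orig y) = le (hi u) y;
  L_dummy u w : u \in S -> w \in S -> dummy u -> dummy w ->
    L u w = (u == w) || le (hi u) (lo w);
  dummy_covers u : u \in S -> dummy u -> covers [set: T] le (lo u) (hi u) }.

Definition dummy_edge (a c : T) : bool :=
  [exists u in S, [&& dummy u, lo u == a & hi u == c]].

Hypotheses (leP : partial_order le) (sdP : subdivision).
Local Notation covS := (covers S L).
Local Notation cov := (covers [set: T] le).
Local Notation nd := (ndiag [set: T] le).

Lemma orig_inj : injective orig.
Proof.
move=> x y exy; apply: (le_anti leP);
  by rewrite -(L_orig sdP) ?exy (L_orig sdP) (lexx leP).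
Qed.

Lemma plt_orig x y : plt L (orig x) (orig y) = plt le x y.
Proof. by rewrite /plt (L_orig sdP) (inj_eq orig_inj). Qed.

Lemma incomp_orig x y : incomp S L (orig x) (orig y) = incomp [set: T] le x y.
Proof. by rewrite /incomp !(orig_in sdP) !in_setT !(L_orig sdP). Qed.

Lemma covers_orig x y : covS (orig x) (orig y) -> cov x y.
Proof.
move=> xy; apply: coversTI => [|z xz zy]; first by rewrite -plt_orig (covers_plt xy).
by apply: (covers_nomid xy (orig_in sdP z)); rewrite plt_orig.
Qed.

Lemma dummy_neq_orig u x : dummy u -> u != orig x.
Proof. by apply: contraTneq => ->; apply: orig_nondummy. Qed.

Lemma plt_lo_dummy u : u \in S -> dummy u -> plt L (orig (lo u)) u.
Proof.
by move=> uS du; rewrite /plt (L_orig_dummy sdP) // (lexx leP) eq_sym dummy_neq_orig.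
Qed.

Lemma plt_dummy_hi u : u \in S -> dummy u -> plt L u (orig (hi u)).
Proof. by move=> uS du; rewrite /plt (L_dummy_orig sdP) // (lexx leP) dummy_neq_orig. Qed.

Lemma L_lo_of_L_dummy z u : z \in S -> u \in S -> dummy u -> z != u ->
  L z u -> L z (orig (lo u)).
Proof.
move=> zS uS du zu; case: (boolP (dummy z)) => [dz | /(nondummy_orig sdP zS)[x ->]].
  by rewrite (L_dummy_orig sdP) // (L_dummy sdP) // (negbTE zu).
by rewrite (L_orig sdP) (L_orig_dummy sdP).
Qed.

Lemma L_hi_of_L_dummy u z : u \in S -> z \in S -> dummy u -> u != z ->
  L u z -> L (orig (hi u)) z.
Proof.
move=> uS zS du uz; case: (boolP (dummy z)) => [dz | /(nondummy_orig sdP zS)[x ->]].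
  by rewrite (L_orig_dummy sdP) // (L_dummy sdP) // (negbTE uz).
by rewrite (L_orig sdP) (L_dummy_orig sdP).
Qed.

Lemma below_dummy z u : dummy u -> covS z u -> z = orig (lo u).
Proof.
move=> du zu; have /andP[zS uS] := covers_mem zu.
case: (eqVneq z (orig (lo u))) => // zlo; exfalso.
have /andP[Lzu nzu] := covers_plt zu.
apply: (covers_nomid zu (orig_in sdP (lo u))) (plt_lo_dummy uS du).
by rewrite /plt zlo andbT L_lo_of_L_dummy.
Qed.

Lemma above_dummy u z : dummy u -> covS u z -> z = orig (hi u).
Proof.
move=> du uz; have /andP[uS zS] := covers_mem uz.
case: (eqVneq z (orig (hi u))) => // zhi; exfalso.
have /andP[Luz nuz] := covers_plt uz.
apply: (covers_nomid uz (orig_in sdP (hi u)) (plt_dummy_hi uS du)).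
by rewrite /plt eq_sym zhi andbT L_hi_of_L_dummy.
Qed.

Lemma dummy_not_covers u : u \in S -> dummy u -> ~~ covS (orig (lo u)) (orig (hi u)).
Proof.
move=> uS du; apply/negP => c.
exact: covers_nomid c uS (plt_lo_dummy uS du) (plt_dummy_hi uS du).
Qed.

Lemma lower_cover_shadow b c z : covS (orig b) (orig c) -> covS z (orig c) ->
  z != orig b -> cov (lo z) c && (lo z != b).
Proof.
move=> bc zc zb; have /andP[zS _] := covers_mem zc.
case: (boolP (dummy z)) => [dz | /(nondummy_orig sdP zS)[x ex]]; last first.
  rewrite ex (lo_orig sdP) -(inj_eq orig_inj) -ex zb andbT.
  by rewrite ex in zc; apply: covers_orig.
have hic : hi z = c by apply: orig_inj; rewrite -(above_dummy dz zc).
rewrite -{1}hic (dummy_covers sdP) //=.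
by apply: contraNneq (dummy_not_covers zS dz) => lob; rewrite lob hic.
Qed.

Lemma upper_cover_shadow b c z : covS (orig b) (orig c) -> covS (orig b) z ->
  z != orig c -> cov b (hi z) && (hi z != c).
Proof.
move=> bc bz zc; have /andP[_ zS] := covers_mem bz.
case: (boolP (dummy z)) => [dz | /(nondummy_orig sdP zS)[x ex]]; last first.
  rewrite ex (hi_orig sdP) -(inj_eq orig_inj) -ex zc andbT.
  by rewrite ex in bz; apply: covers_orig.
have lob : lo z = b by apply: orig_inj; rewrite -(below_dummy dz bz).
rewrite -{1}lob (dummy_covers sdP) //=.
by apply: contraNneq (dummy_not_covers zS dz) => hic; rewrite lob hic.
Qed.

Lemma Ndiag_orig p : p \in Ndiag S L -> exists b c, p = (orig b, orig c).
Proof.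
case: p => p q; rewrite inE => /ndiagP[a [d [pq aq pd ad]]].
have /andP[pS qS] := covers_mem pq.
have /and4P[_ _ nad _] := ad.
have np : ~~ dummy p.
  apply/negP => dp; move: nad.
  by rewrite (above_dummy dp pd) -(above_dummy dp pq) (pltW (covers_plt aq)).
have nq : ~~ dummy q.
  apply/negP => dq; move: nad.
  by rewrite (below_dummy dq aq) -(below_dummy dq pq) (pltW (covers_plt pd)).
have [[b ->] [c ->]] := (nondummy_orig sdP pS np, nondummy_orig sdP qS nq).
by exists b, c.
Qed.

Lemma Ndiag_subdivision b c : (orig b, orig c) \in Ndiag S L ->
  exists a d, [/\ cov b c, cov a c && (a != b), cov b d && (d != c)
              & [|| nd (b, c), dummy_edge a c | dummy_edge b d]].
Proof.
rewrite inE => /ndiagP[a' [d' [bc a'c bd' a'd']]].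
have /and4P[a'S d'S na'd' _] := a'd'.
have a'b : a' != orig b.
  by apply: contraNneq na'd' => ->; rewrite (pltW (covers_plt bd')).
have d'c : d' != orig c.
  by apply: contraNneq na'd' => ->; rewrite (pltW (covers_plt a'c)).
exists (lo a'), (hi d'); split.
- exact: covers_orig.
- exact: lower_cover_shadow bc a'c a'b.
- exact: upper_cover_shadow bc bd' d'c.
case: (boolP (dummy a')) => [da' | /(nondummy_orig sdP a'S)[a ea']].
  apply/or3P/Or32/existsP; exists a'; rewrite a'S da' eqxx /=.
  by apply/eqP/orig_inj; rewrite -(above_dummy da' a'c).
case: (boolP (dummy d')) => [dd' | /(nondummy_orig sdP d'S)[d ed']].
  apply/or3P/Or33/existsP; exists d'; rewrite d'S dd' eqxx andbT.
  by apply/eqP/orig_inj; rewrite -(below_dummy dd' bd').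
apply/or3P/Or31/ndiagP; exists (lo a'), (hi d').
rewrite ea' ed' (lo_orig sdP) (hi_orig sdP) -incomp_orig -ea' -ed'.
by split=> //; apply: covers_orig; rewrite -?ea' -?ed'.
Qed.

Hypothesis dummy_ndiag : forall u, u \in S -> dummy u -> nd (lo u, hi u).

Lemma ndiag_of_dummy_edge a c : dummy_edge a c -> nd (a, c).
Proof.
by case/exists_inP => u uS /and3P[du /eqP <- /eqP <-]; apply: dummy_ndiag.
Qed.

Lemma ndiag_at_of_Ndiag_top a b c : (orig a, orig c) \in Ndiag S L ->
  cov b c -> b != a -> ndiag_at le b c.
Proof.
case/Ndiag_subdivision => a1 [d1 [ac /andP[a1c _] _ E]] bc ba.
rewrite /ndiag_at; case: (boolP [exists x, nd (x, c)]) => //= /existsPn noc.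
case/or3P: E => [acN | /ndiag_of_dummy_edge a1cN | /ndiag_of_dummy_edge ad1].
- by move: (noc a); rewrite acN.
- by move: (noc a1); rewrite a1cN.
have ab : a != b by rewrite eq_sym.
by apply/existsP; exists d1; exact: (ndiag_shift_bottom leP ac bc ab noc ad1).
Qed.

Lemma ndiag_at_of_Ndiag_bottom b c d : (orig b, orig d) \in Ndiag S L ->
  cov b c -> c != d -> ndiag_at le b c.
Proof.
case/Ndiag_subdivision => a1 [d1 [bd /andP[a1d _] _ E]] bc cd.
rewrite /ndiag_at; case: (boolP [exists y, nd (b, y)]); rewrite ?orbT // => /existsPn nob.
case/or3P: E => [bdN | /ndiag_of_dummy_edge a1dN | /ndiag_of_dummy_edge bd1].
- by move: (nob d); rewrite bdN.
- have dc : d != c by rewrite eq_sym.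
  apply/orP; left; apply/existsP; exists a1.
  exact: (ndiag_shift_top leP bd bc dc nob a1dN).
by move: (nob d1); rewrite bd1.
Qed.

End Subdivision.

Lemma memSN_inl (T : finType) (S : {set T}) (le : rel T) x :
  (inl x \in SN_set S le) = (x \in S).
Proof.
rewrite in_setU (mem_imset _ _ (@inl_inj _ _)) orbC.
by case: imsetP => // -[].
Qed.

Lemma memSN_inr (T : finType) (S : {set T}) (le : rel T) q :
  (inr q \in SN_set S le) = (q \in Ndiag S le).
Proof.
rewrite in_setU (mem_imset _ _ (@inr_inj _ _)).
by case: imsetP => // -[].
Qed.

Definition SN_dummy (T : finType) : pred (SNT T) :=
  fun e => if e is inr _ then true else false.
Definition SN_lo (T : finType) (e : SNT T) : T :=
  match e with inl x => x | inr q => q.1 end.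
Definition SN_hi (T : finType) (e : SNT T) : T :=
  match e with inl x => x | inr q => q.2 end.

Definition SN2_dummy (T : finType) : pred (SNT (SNT T)) :=
  fun z => if z is inl (inl _) then false else true.
Definition SN2_lo (T : finType) (z : SNT (SNT T)) : T :=
  match z with inl e => SN_lo e | inr p => SN_lo p.1 end.
Definition SN2_hi (T : finType) (z : SNT (SNT T)) : T :=
  match z with inl e => SN_hi e | inr p => SN_hi p.2 end.

(* The edges of P that carry a dummy vertex of S_N(S_N(P)). *)
Definition ndiag2 (T : finType) (le : rel T) (p : T * T) : bool :=
  ndiag [set: T] le p ||
  ((inl p.1, inl p.2) \in Ndiag (SN_set [set: T] le) (SN_le le)).

Section SN.
Variables (T : finType) (le : rel T).
Hypothesis leP : partial_order le.
Local Notation S1 := (SN_set [set: T] le).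
Local Notation L1 := (SN_le le).
Local Notation S2 := (SN_set S1 L1).
Local Notation L2 := (SN_le L1).
Local Notation cov := (covers [set: T] le).
Local Notation nd := (ndiag [set: T] le).

Lemma SN_dummy_ndiag u : u \in S1 -> SN_dummy u -> nd (SN_lo u, SN_hi u).
Proof. by case: u => [//|[b c]]; rewrite memSN_inr inE. Qed.

Lemma subdivision_SN : subdivision le S1 L1 inl (@SN_dummy T) (@SN_lo T) (@SN_hi T).
Proof.
split=> //.
- by move=> x; rewrite memSN_inl in_setT.
- by case=> [x|//] _ _; exists x.
- by move=> x [].
- by case.
- by case=> [//|p] [].
by move=> u uS du; have /ndiagP[? [? []]] := SN_dummy_ndiag uS du.
Qed.

Lemma ndiag_at_of_ndiag2_top a b c :
  ndiag2 le (a, c) -> cov b c -> b != a -> ndiag_at le b c.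
Proof.
case/orP => /= [acN _ _ | acN].
  by apply/orP; left; apply/existsP; exists a.
exact: (ndiag_at_of_Ndiag_top leP subdivision_SN SN_dummy_ndiag acN).
Qed.

Lemma ndiag_at_of_ndiag2_bottom b c d :
  ndiag2 le (b, d) -> cov b c -> c != d -> ndiag_at le b c.
Proof.
case/orP => /= [bdN _ _ | bdN].
  by apply/orP; right; apply/existsP; exists d.
exact: (ndiag_at_of_Ndiag_bottom leP subdivision_SN SN_dummy_ndiag bdN).
Qed.

Lemma SN2_dummyP z : z \in S2 -> SN2_dummy z ->
  (exists q, z = inl (inr q) /\ nd q) \/
  (exists b c, z = inr (inl b, inl c) /\ (inl b, inl c) \in Ndiag S1 L1).
Proof.
case: z => [[//|q]|p].
  by rewrite memSN_inl memSN_inr inE => qN _; left; exists q.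
rewrite memSN_inr => pN _; right.
have [b [c ep]] := Ndiag_orig leP subdivision_SN pN.
by exists b, c; rewrite -ep.
Qed.

Lemma ndiag2_SN2_dummy z : z \in S2 -> SN2_dummy z -> ndiag2 le (SN2_lo z, SN2_hi z).
Proof.
by move=> zS dz; case: (SN2_dummyP zS dz) => [[[b c] [-> bcN]] | [b [c [-> bcN]]]];
  rewrite /ndiag2 /= bcN ?orbT.
Qed.

Section Intermediate.
Variable S' : {set SNT (SNT T)}.
Hypotheses (PS' : [set emb2 x | x : T] \subset S') (S'S2 : S' \subset S2).

Lemma subdivision_SN2 :
  subdivision le S' L2 (@emb2 T) (@SN2_dummy T) (@SN2_lo T) (@SN2_hi T).
Proof.
split=> //.
- by move=> x; apply: (subsetP PS'); apply: imset_f.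
- by case=> [[x|//]|//] _ _; exists x.
- by move=> x [[y|q]|[[y|q] f]].
- by case=> [[x|q]|[e [y|q]]].
- move=> u w /(subsetP S'S2) uS /(subsetP S'S2) wS du dw.
  by case: (SN2_dummyP uS du) => [[p [-> _]] | [b [c [-> _]]]];
     case: (SN2_dummyP wS dw) => [[q [-> _]] | [b' [c' [-> _]]]].
move=> u /(subsetP S'S2) uS du; case/orP: (ndiag2_SN2_dummy uS du).
  by case/ndiagP => ? [? []].
by rewrite inE => /ndiagP[? [? [/(covers_orig leP subdivision_SN)]]].
Qed.

Lemma ndiag2_of_dummy_edge a c :
  dummy_edge S' (@SN2_dummy T) (@SN2_lo T) (@SN2_hi T) a c -> ndiag2 le (a, c).
Proof.
case/exists_inP => u /(subsetP S'S2) uS /and3P[du /eqP <- /eqP <-].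
exact: ndiag2_SN2_dummy.
Qed.

End Intermediate.
End SN.

Theorem lemma5 (T : finType) (le : rel T)
  (Hrefl : po_refl le) (Hanti : po_antisym le) (Htrans : po_trans le)
  (S' : {set SNT (SNT T)})
  (HPsub : [set emb2 x | x : T] \subset S')
  (HSsub : S' \subset SN_set (SN_set [set: T] le) (SN_le le)) :
  Ndiag S' (SN_le (SN_le le)) \subset
    [set (emb2 p.1, emb2 p.2) | p in Ndiag [set: T] le :|: Aset [set: T] le].
Proof.
have leP : partial_order le := PartialOrder Hrefl Hanti Htrans.
have sdP := subdivision_SN2 leP HPsub HSsub.
apply/subsetP => p pN; have [b [c ep]] := Ndiag_orig leP sdP pN; subst p.
apply/imsetP; exists (b, c) => //.
have [a [d [bc /andP[ac ab] /andP[bd dc] E]]] := Ndiag_subdivision leP sdP pN.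
apply: (mem_NdiagUA bc ac ab bd dc).
have ndiag2E := ndiag2_of_dummy_edge leP HSsub.
case/or3P: E => [-> // | /ndiag2E acN | /ndiag2E bdN].
  by rewrite (ndiag_at_of_ndiag2_top leP acN bc) ?orbT // eq_sym.
by rewrite (ndiag_at_of_ndiag2_bottom leP bdN bc) ?orbT // eq_sym.
Qed.
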